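(* Let $n,p,n_\xi\ge 1$ be integers, let $f_1,\dots,f_n:\mathbb{R}^p\to\mathbb{R}$ be continuously differentiable, and let $g=\frac1n\sum_{i=1}^n f_i$. Suppose there exists a unique $x^*\in\mathbb{R}^p$ with $\nabla g(x^* )=0$. Let $\tilde A_i\in\mathbb{R}^{n_\xi\times n_\xi}$, $\tilde B_i\in\mathbb{R}^{n_\xi\times n}$ ($i=1,\dots,n$) and $\tilde C\in\mathbb{R}^{1\times n_\xi}$, and set $A_i=\tilde A_i\otimes I_p$, $B_i=\tilde B_i\otimes I_p$, $C=\tilde C\otimes I_p$. Consider the jump system $$\xi^{k+1}=A_{i_k}\xi^k+B_{i_k}w^k,\qquad v^k=C\xi^k,\qquad w^k=\begin{bmatrix}\nabla f_1(v^k)\\ \vdots\\ \nabla f_n(v^k)\end{bmatrix},$$ where the indices $i_k$ are sampled IID from the uniform distribution on $\{1,\dots,n\}$. Let $w^*=\begin{bmatrix}\nabla f_1(x^* )^T&\cdots&\nabla f_n(x^* )^T\end{bmatrix}^T$ and let $\xi^*\in\mathbb{R}^{n_\xi p}$ satisfy $\xi^*=A_i\xi^*+B_iw^*$ for all $i\in\{1,\dots,n\}$ and $C\xi^*=x^*$. Assume that for some prescribed scalars $\nu,\gamma$ and $L$, for all $x\in\mathbb{R}^p$ and all $i$, $$\begin{bmatrix} x-x^*\\ \frac1n\sum_{j=1}^n\nabla f_j(x)-\frac1n\sum_{j=1}^n\nabla f_j(x^* )\end{bmatrix}^T\begin{bmatrix}2L\nu I_p&(L-\nu)I_p\\(L-\nu)I_p&-2I_p\end{bmatrix}\begin{bmatrix}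 x-x^*\\ \frac1n\sum_{j=1}^n\nabla f_j(x)-\frac1n\sum_{j=1}^n\nabla f_j(x^* )\end{bmatrix}\ge0,$$ $$\begin{bmatrix} x-x^*\\ \nabla f_i(x)-\nabla f_i(x^* )\end{bmatrix}^T\begin{bmatrix}2L\gamma I_p&(L-\gamma)I_p\\(L-\gamma)I_p&-2I_p\end{bmatrix}\begin{bmatrix} x-x^*\\ \nabla f_i(x)-\nabla f_i(x^* )\end{bmatrix}\ge0.$$ Define $\tilde D_{\psi1}=\begin{bmatrix}L&\nu&L&\gamma&\cdots&L&\gamma\end{bmatrix}^T\in\mathbb{R}^{2n+2}$ (the pair $L,\gamma$ repeated $n$ times) and $\tilde D_{\psi2}=\begin{bmatrix}-\frac1n e&\frac1n e&-e_1&e_1&\cdots&-e_n&e_n\end{bmatrix}^T\in\mathbb{R}^{(2n+2)\times n}$. If, for a given scalar $\rho$, there exist a symmetric matrix $\tilde P\in\mathbb{R}^{n_\xi\times n_\xi}$ with $\tilde P>0$ and nonnegative scalars $\lambda_1,\lambda_2$ such that $$\begin{bmatrix}\frac1n\sum_{i=1}^n\tilde A_i^T\tilde P\tilde A_i-\rho^2\tilde P&\frac1n\sum_{i=1}^n\tilde A_i^T\tilde P\tilde B_i\\ \frac1n\sum_{i=1}^n\tilde B_i^T\tilde P\tilde A_i&\frac1n\sum_{i=1}^n\tilde B_i^T\tilde P\tilde B_i\end{bmatrix}+\begin{bmatrix}\tilde C^T\tilde D_{\psi1}^T\\ \tilde D_{\psi2}^T\end{bmatrix}\left(\begin{bmatrix}\lambda_1&\tilde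 0^T\\ \tilde 0&\frac{\lambda_2}{n}I_n\end{bmatrix}\otimes\begin{bmatrix}0&1\\1&0\end{bmatrix}\right)\begin{bmatrix}\tilde D_{\psi1}\tilde C&\tilde D_{\psi2}\end{bmatrix}\le0,$$ then for all $k\ge1$ and all $\xi^0\in\mathbb{R}^{n_\xi p}$, $$\mathbb{E}\left[(\xi^{k+1}-\xi^* )^T(\tilde P\otimes I_p)(\xi^{k+1}-\xi^* )\right]\le\rho^2\,\mathbb{E}\left[(\xi^{k}-\xi^* )^T(\tilde P\otimes I_p)(\xi^{k}-\xi^* )\right],$$ and consequently $\mathbb{E}\|\xi^k-\xi^*\|^2\le\rho^{2k}\,\mathrm{cond}(\tilde P)\,\|\xi^0-\xi^*\|^2$ for all $k\ge1$.
   Context: $e_i$ is the $i$-th standard basis vector of $\mathbb{R}^n$, $e\in\mathbb{R}^n$ is the all-ones vector, $\tilde 0\in\mathbb{R}^n$ is the zero vector, $\otimes$ is the Kronecker product, and $M\le0$ means negative semidefinite. $\mathrm{cond}(\tilde P)$ is the condition number (ratio of largest to smallest eigenvalue) of the positive definite matrix $\tilde P$. Expectation is over the random indices $i_k$. *)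

From HB Require Import structures.
From mathcomp Require Import all_boot all_order all_algebra.
From mathcomp Require Import all_classical all_reals all_analysis.
From mathcomp Require Import mxtens.
Set Implicit Arguments. Unset Strict Implicit. Unset Printing Implicit Defensive.
Import Order.TTheory GRing.Theory Num.Theory.
Import numFieldNormedType.Exports.
Local Open Scope ring_scope.

Section Defs.
Variable R : realType.

Definition sqnorm {m} (v : 'cV[R]_m) : R := \sum_i v i 0 ^+ 2.

Definition qform {m} (M : 'M[R]_m) (v : 'cV[R]_m) : R := (v^T *m M *m v) 0 0.

Definition nsd {m} (M : 'M[R]_m) : Prop := forall v, qform M v <= 0.
Definition spd {m} (M : 'M[R]_m) : Prop :=
  M^T = M /\ forall v : 'cV[R]_m, v != 0 -> 0 < qform M v.

Definition cond {m} (M : 'M[R]_m) : R :=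
  sup [set a : R | eigenvalue M a] / inf [set a : R | eigenvalue M a].

Definition is_gradient {p} (f : 'cV[R]_p -> R) (gf : 'cV[R]_p -> 'cV[R]_p) : Prop :=
  forall x, differentiable f x /\
    ('d f x : 'cV[R]_p -> R) = (fun h => \sum_j gf x j 0 * h j 0).

(* Stacked gradient vector [grad f_1 (v); ...; grad f_n (v)] in R^{n p},
   indexed consistently with the Kronecker product (index (i,j) |-> i*p+j). *)
Definition stack {n p} (gr : 'I_n -> 'cV[R]_p -> 'cV[R]_p) (v : 'cV[R]_p)
  : 'cV[R]_(n * p) :=
  \col_k gr (mxtens_unindex k).1 v (mxtens_unindex k).2 0.

(* C = Ct (x) I_p, with the row dimension 1*p identified with p. *)
Definition kronC {nxi p} (Ct : 'rV[R]_nxi) : 'M[R]_(p, nxi * p) :=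
  castmx (mul1n p, erefl) (Ct *t (1%:M : 'M[R]_p)).

Definition jstep {n p nxi} (At : 'I_n -> 'M[R]_nxi) (Bt : 'I_n -> 'M[R]_(nxi, n))
  (Ct : 'rV[R]_nxi) (gr : 'I_n -> 'cV[R]_p -> 'cV[R]_p)
  (xi : 'cV[R]_(nxi * p)) (i : 'I_n) : 'cV[R]_(nxi * p) :=
  (At i *t (1%:M : 'M[R]_p)) *m xi
  + (Bt i *t (1%:M : 'M[R]_p)) *m stack gr (kronC Ct *m xi).

Definition traj {n p nxi} At Bt Ct gr (xi0 : 'cV[R]_(nxi * p)) (s : seq 'I_n) :=
  foldl (@jstep n p nxi At Bt Ct gr) xi0 s.

(* Expectation over i_0, ..., i_{k-1} IID uniform on {1..n}:
   E[h(xi^k)] = n^{-k} sum over all index sequences of length k. *)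
Definition Exp {n p nxi} At Bt Ct gr (xi0 : 'cV[R]_(nxi * p)) (k : nat)
  (h : 'cV[R]_(nxi * p) -> R) : R :=
  (n%:R ^- k) * \sum_(s : k.-tuple 'I_n) h (@traj n p nxi At Bt Ct gr xi0 s).

(* D_psi1 = [L nu L gamma ... L gamma]^T, indexed by (q, b) in (1+n) x 2. *)
Definition Dpsi1 {n} (L nu gam : R) : 'cV[R]_((1 + n) * 2) :=
  \col_k (let qb := mxtens_unindex k in
          if qb.2 == 0 then L else if qb.1 == 0 then nu else gam).

(* D_psi2 = [-e/n  e/n  -e_1  e_1 ... -e_n  e_n]^T. *)
Definition Dpsi2 {n} : 'M[R]_((1 + n) * 2, n) :=
  \matrix_(k, j) (let qb := mxtens_unindex k in
     (if qb.2 == 0 then -1 else 1) *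
     (if qb.1 == 0 :> nat then n%:R^-1 else ((qb.1 : nat) == j.+1)%:R)).

Definition Mpsi {n} (l1 l2 : R) : 'M[R]_((1 + n) * 2) :=
  (block_mx (l1%:M : 'M[R]_(1)) 0 0 ((l2 / n%:R)%:M : 'M[R]_(n)))
    *t (\matrix_(i < 2, j < 2) (i != j)%:R).

Definition avg {n m1 m2} (F : 'I_n -> 'M[R]_(m1, m2)) : 'M[R]_(m1, m2) :=
  n%:R^-1 *: \sum_i F i.

Definition LMI {n nxi} (At : 'I_n -> 'M[R]_nxi) (Bt : 'I_n -> 'M[R]_(nxi, n))
  (Ct : 'rV[R]_nxi) (P : 'M[R]_nxi) (rho L nu gam l1 l2 : R) : 'M[R]_(nxi + n) :=
  block_mx (avg (fun i => (At i)^T *m P *m At i) - rho ^+ 2 *: P)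
           (avg (fun i => (At i)^T *m P *m Bt i))
           (avg (fun i => (Bt i)^T *m P *m At i))
           (avg (fun i => (Bt i)^T *m P *m Bt i))
  + (row_mx (Dpsi1 L nu gam *m Ct) Dpsi2)^T *m Mpsi l1 l2
      *m row_mx (Dpsi1 L nu gam *m Ct) Dpsi2.

Definition sector_qf {p} (L c : R) (dx du : 'cV[R]_p) : R :=
  qform (block_mx ((2 * L * c)%:M) ((L - c)%:M) ((L - c)%:M) ((-2)%:M) : 'M[R]_(p + p))
        (col_mx dx du).

End Defs.

From HB Require Import structures.
From mathcomp Require Import all_boot all_order all_algebra.
From mathcomp Require Import all_classical all_reals all_analysis.
From mathcomp Require Import mxtens.
From mathcomp Require Import ring lra.
Import Order.TTheory GRing.Theory Num.Theory.
Import numFieldNormedType.Exports.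
Local Open Scope ring_scope.
Set Implicit Arguments. Unset Strict Implicit. Unset Printing Implicit Defensive.

(* Every matrix of the system is a Kronecker product with I_p, so R^(n_xi p)
   splits into p slices that all evolve through the same n_xi-dimensional
   matrices, and V(xi) = e^T (P (x) I_p) e, with e = xi - xi^*, is the sum of
   the slice forms.  With u = w - w^*, the error obeys e+ = A_i e + B_i u.
   Evaluating the LMI at each slice [e_j; u_j] bounds the average of V over the
   n successors by rho^2 V minus the M_psi-form of D_psi [e_j; u_j]; summed
   over j, that form is lambda1 times the first sector constraint plus
   lambda2/n times the n others, hence nonnegative.  Averaging over the index
   sequence gives E V(xi^(k+1)) <= rho^2 E V(xi^k), hence
   E V(xi^k) <= rho^(2k) V(xi^0), and V lies between the extreme eigenvalues of
   P times the squared norm; these exist as extrema of the Rayleigh quotient on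
   the compact unit sphere. *)

Section QuadraticForms.
Variable R : realType.
Implicit Types (a b m : nat).

Definition bform a b (M : 'M[R]_(a, b)) (x : 'cV[R]_a) (y : 'cV[R]_b) : R :=
  (x^T *m M *m y) 0 0.

Lemma qform_bform m (M : 'M[R]_m) v : qform M v = bform M v v.
Proof. by []. Qed.

Lemma bformE a b (M : 'M[R]_(a, b)) x y :
  bform M x y = \sum_i \sum_j x i 0 * M i j * y j 0.
Proof.
rewrite /bform mxE exchange_big /=; apply: eq_bigr => j _.
by rewrite !mxE big_distrl /=; apply: eq_bigr => i _; rewrite !mxE.
Qed.

Lemma bformD a b (M N : 'M[R]_(a, b)) x y :
  bform (M + N) x y = bform M x y + bform N x y.
Proof. by rewrite /bform mulmxDr mulmxDl mxE. Qed.

Lemma bformN a b (M : 'M[R]_(a, b)) x y : bform (- M) x y = - bform M x y.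
Proof. by rewrite /bform mulmxN mulNmx mxE. Qed.

Lemma bformZ a b (c : R) (M : 'M[R]_(a, b)) x y : bform (c *: M) x y = c * bform M x y.
Proof. by rewrite /bform -scalemxAr -scalemxAl mxE. Qed.

Lemma bform_sum a b (I : finType) (F : I -> 'M[R]_(a, b)) x y :
  bform (\sum_i F i) x y = \sum_i bform (F i) x y.
Proof. by rewrite /bform mulmx_sumr mulmx_suml summxE. Qed.

Lemma bformDl a b (M : 'M[R]_(a, b)) x1 x2 y :
  bform M (x1 + x2) y = bform M x1 y + bform M x2 y.
Proof. by rewrite /bform linearD /= !mulmxDl mxE. Qed.

Lemma bformDr a b (M : 'M[R]_(a, b)) x y1 y2 :
  bform M x (y1 + y2) = bform M x y1 + bform M x y2.
Proof. by rewrite /bform !mulmxDr mxE. Qed.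

Lemma bformZl a b (M : 'M[R]_(a, b)) (c : R) x y : bform M (c *: x) y = c * bform M x y.
Proof. by rewrite /bform linearZ /= -!scalemxAl mxE. Qed.

Lemma bformZr a b (M : 'M[R]_(a, b)) (c : R) x y : bform M x (c *: y) = c * bform M x y.
Proof. by rewrite /bform -scalemxAr mxE. Qed.

Lemma bform_mulmx a b c (A : 'M[R]_(a, b)) (P : 'M[R]_a) (B : 'M[R]_(a, c)) x y :
  bform (A^T *m P *m B) x y = bform P (A *m x) (B *m y).
Proof. by rewrite /bform trmx_mul !mulmxA. Qed.

Lemma bformC m (M : 'M[R]_m) x y : M^T = M -> bform M x y = bform M y x.
Proof.
move=> Msym; rewrite /bform -[in LHS](trmxK (x^T *m M *m y)) mxE.
by rewrite !trmx_mul trmxK Msym mulmxA.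
Qed.

Lemma bform_scalar_mx m (c : R) (x y : 'cV[R]_m) :
  bform c%:M x y = c * \sum_j x j 0 * y j 0.
Proof.
rewrite /bform mul_mx_scalar -scalemxAl mxE; congr (_ * _).
by rewrite mxE; apply: eq_bigr => j _; rewrite mxE.
Qed.

Lemma qformE m (M : 'M[R]_m) v : qform M v = \sum_a \sum_b v a 0 * M a b * v b 0.
Proof. exact: bformE. Qed.

Lemma qform_addmx m (M N : 'M[R]_m) v : qform (M + N) v = qform M v + qform N v.
Proof. exact: bformD. Qed.

Lemma qform_oppmx m (M : 'M[R]_m) v : qform (- M) v = - qform M v.
Proof. exact: bformN. Qed.

Lemma qform_mulmx a b (Z : 'M[R]_(a, b)) (M : 'M[R]_a) v :
  qform (Z^T *m M *m Z) v = qform M (Z *m v).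
Proof. exact: bform_mulmx. Qed.

Lemma qformD m (M : 'M[R]_m) u v :
  qform M (u + v) = qform M u + bform M u v + bform M v u + qform M v.
Proof. by rewrite !qform_bform bformDl !bformDr !addrA. Qed.

Lemma qformZ m (M : 'M[R]_m) (c : R) v : qform M (c *: v) = c ^+ 2 * qform M v.
Proof. by rewrite qform_bform bformZl bformZr mulrA -expr2. Qed.

Lemma qform_block_mx a b (X : 'M[R]_a) (Y : 'M[R]_(a, b)) (Z : 'M[R]_(b, a))
    (W : 'M[R]_b) e u :
  qform (block_mx X Y Z W) (col_mx e u) =
  qform X e + bform Y e u + bform Z u e + qform W u.
Proof.
rewrite /qform /bform tr_col_mx mul_row_block mul_row_col !mulmxDl !mxE.
by rewrite !addrA; congr (_ + _); rewrite -!addrA; congr (_ + _); rewrite addrC.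
Qed.

Lemma sqnormE m (v : 'cV[R]_m) : sqnorm v = (v^T *m v) 0 0.
Proof. by rewrite mxE; apply: eq_bigr => i _; rewrite mxE expr2. Qed.

Lemma qform_scalar_mx m (c : R) (v : 'cV[R]_m) : qform c%:M v = c * sqnorm v.
Proof. by rewrite qform_bform bform_scalar_mx. Qed.

Lemma sqnormZ m (c : R) (v : 'cV[R]_m) : sqnorm (c *: v) = c ^+ 2 * sqnorm v.
Proof. by rewrite /sqnorm mulr_sumr; apply: eq_bigr => i _; rewrite mxE exprMn. Qed.

Lemma sqnorm_ge0 m (v : 'cV[R]_m) : 0 <= sqnorm v.
Proof. by apply: sumr_ge0 => i _; exact: sqr_ge0. Qed.

Lemma sqnorm_eq0 m (v : 'cV[R]_m) : (sqnorm v == 0) = (v == 0).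
Proof.
apply/idP/eqP => [/eqP/psumr_eq0P v0|->]; last first.
  by rewrite /sqnorm big1 // => i _; rewrite mxE expr0n.
apply/matrixP => i j; rewrite [j]ord1 mxE.
by apply/eqP; rewrite -sqrf_eq0; apply/eqP/v0 => // k _; exact: sqr_ge0.
Qed.

Lemma sqnorm_gt0 m (v : 'cV[R]_m) : (0 < sqnorm v) = (v != 0).
Proof. by rewrite lt_def sqnorm_eq0 sqnorm_ge0 andbT. Qed.

End QuadraticForms.

Section KroneckerProducts.
Variable R : realType.
Implicit Types (m p : nat).

Lemma big_mxtens_index m p (F : 'I_(m * p) -> R) :
  \sum_k F k = \sum_a \sum_j F (mxtens_index (a, j)).
Proof.
rewrite pair_big (reindex (@mxtens_index m p)) /=; last first.
  by exists (@mxtens_unindex m p) => x _; rewrite (mxtens_indexK, mxtens_unindexK).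
by apply: eq_bigr => -[a j].
Qed.

Lemma qform_tensE a b (M : 'M[R]_a) (N : 'M[R]_b) (y : 'cV[R]_(a * b)) :
  qform (M *t N) y = \sum_q \sum_r M q r *
    bform N (\col_c y (mxtens_index (q, c)) 0) (\col_c y (mxtens_index (r, c)) 0).
Proof.
rewrite qformE big_mxtens_index; apply: eq_bigr => q _.
under eq_bigr => c _ do rewrite big_mxtens_index.
rewrite exchange_big /=; apply: eq_bigr => r _.
rewrite bformE big_distrr /=; apply: eq_bigr => c _.
rewrite big_distrr /=; apply: eq_bigr => c' _.
by rewrite tensmxE !mxE; ring.
Qed.

Lemma qform_diag_tens a b (d : 'rV[R]_a) (N : 'M[R]_b) (y : 'cV[R]_(a * b)) :
  qform (diag_mx d *t N) y = \sum_q d 0 q * qform N (\col_c y (mxtens_index (q, c)) 0).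
Proof.
rewrite qform_tensE; apply: eq_bigr => q _.
rewrite (bigD1 q) //= big1 ?addr0 => [|r /negPf rq]; last by rewrite mxE eq_sym rq mulr0n mul0r.
by rewrite mxE eqxx mulr1n.
Qed.

(* The j-th of the p interleaved copies of R^m inside R^m (x) R^p. *)
Definition slice m p (x : 'cV[R]_(m * p)) (j : 'I_p) : 'cV[R]_m :=
  \col_a x (mxtens_index (a, j)) 0.

Lemma sliceD m p (x y : 'cV[R]_(m * p)) j : slice (x + y) j = slice x j + slice y j.
Proof. by apply/matrixP => a b; rewrite !mxE. Qed.

Lemma tens1mxE m q p (M : 'M[R]_(m, q)) a b j k :
  (M *t (1%:M : 'M[R]_p)) (mxtens_index (a, j)) (mxtens_index (b, k)) = M a b * (j == k)%:R.
Proof. by rewrite tensmxE mxE. Qed.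

Lemma qform_tens1 m p (M : 'M[R]_m) (x : 'cV[R]_(m * p)) :
  qform (M *t (1%:M : 'M[R]_p)) x = \sum_j qform M (slice x j).
Proof.
rewrite qformE big_mxtens_index.
under eq_bigr => a _ do under eq_bigr => j _ do rewrite big_mxtens_index.
rewrite exchange_big /=; apply: eq_bigr => j _.
rewrite qformE; apply: eq_bigr => a _; apply: eq_bigr => b _.
rewrite (bigD1 j) //= big1 ?addr0 => [|k /negPf kj]; last first.
  by rewrite tens1mxE eq_sym kj !mulr0 mul0r.
by rewrite tens1mxE eqxx mulr1 !mxE.
Qed.

Lemma sqnorm_slice m p (x : 'cV[R]_(m * p)) : sqnorm x = \sum_j sqnorm (slice x j).
Proof.
rewrite /sqnorm big_mxtens_index exchange_big /=; apply: eq_bigr => j _.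
by apply: eq_bigr => a _; rewrite mxE.
Qed.

Lemma slice_tens1_mulmx m q p (M : 'M[R]_(m, q)) (x : 'cV[R]_(q * p)) j :
  slice ((M *t (1%:M : 'M[R]_p)) *m x) j = M *m slice x j.
Proof.
apply/matrixP => a c; rewrite !mxE big_mxtens_index; apply: eq_bigr => b _.
rewrite (bigD1 j) //= big1 ?addr0 => [|k /negPf kj]; last first.
  by rewrite tens1mxE eq_sym kj mulr0 !mul0r.
by rewrite tens1mxE eqxx mulr1 mxE.
Qed.

Lemma kronC_mulmxE nxi p (Ct : 'rV[R]_nxi) (x : 'cV[R]_(nxi * p)) j :
  (kronC Ct *m x) j 0 = (Ct *m slice x j) 0 0.
Proof.
have -> : (kronC Ct *m x) j 0 = ((Ct *t (1%:M : 'M[R]_p)) *m x) (mxtens_index (0, j)) 0.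
  rewrite !mxE; apply: eq_bigr => k _; rewrite castmxE cast_ord_id.
  suff -> : cast_ord (esym (mul1n p)) j = mxtens_index (0 : 'I_1, j) by [].
  by apply: val_inj; rewrite /= mul0n.
by rewrite -(@slice_tens1_mulmx 1 nxi p Ct x j) [RHS]mxE.
Qed.

Lemma qform_tens1_ge m p (M : 'M[R]_m) (c : R) :
  (forall v, c * sqnorm v <= qform M v) ->
  forall x : 'cV[R]_(m * p), c * sqnorm x <= qform (M *t (1%:M : 'M[R]_p)) x.
Proof. by move=> Mc x; rewrite qform_tens1 sqnorm_slice mulr_sumr; apply: ler_sum. Qed.

Lemma qform_tens1_le m p (M : 'M[R]_m) (c : R) :
  (forall v, qform M v <= c * sqnorm v) ->
  forall x : 'cV[R]_(m * p), qform (M *t (1%:M : 'M[R]_p)) x <= c * sqnorm x.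
Proof. by move=> Mc x; rewrite qform_tens1 sqnorm_slice mulr_sumr; apply: ler_sum. Qed.

End KroneckerProducts.

Section SectorConstraints.
Variable R : realType.

Definition sector_term (L c x u : R) : R := (L * x - u) * (c * x + u).

Lemma sector_qfE p (L c : R) (dx du : 'cV[R]_p) :
  sector_qf L c dx du = 2 * \sum_j sector_term L c (dx j 0) (du j 0).
Proof.
rewrite /sector_qf qform_block_mx !qform_bform !bform_scalar_mx !mulr_sumr -!big_split /=.
by apply: eq_bigr => j _; rewrite /sector_term; ring.
Qed.

Lemma qform_swap2 (v : 'cV[R]_2) :
  qform (\matrix_(i < 2, j < 2) (i != j)%:R) v = 2 * (v 0 0 * v 1 0).
Proof.
rewrite qformE !big_ord_recl !big_ord0 !mxE /=.
have -> : lift ord0 ord0 = 1 :> 'I_2 by apply: val_inj.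
by have -> : ord0 = 0 :> 'I_2 by []; ring.
Qed.

(* The top block of D_psi [z; u] feeds the constraint on the average gradient,
   block i + 1 the constraint on the i-th gradient. *)
Lemma qform_Mpsi_Dpsi n (l1 l2 L nu gam : R) (z : 'M[R]_1) (u : 'I_n -> R) :
  qform (Mpsi l1 l2) (Dpsi1 L nu gam *m z + Dpsi2 R *m \col_i u i) =
  2 * (l1 * sector_term L nu (z 0 0) (n%:R^-1 * \sum_i u i)
       + l2 / n%:R * \sum_i sector_term L gam (z 0 0) (u i)).
Proof.
set y := _ + _.
have yE q b : y (mxtens_index (q, b)) 0 =
    Dpsi1 L nu gam (mxtens_index (q, b)) 0 * z 0 0
    + \sum_j Dpsi2 R (mxtens_index (q, b)) j * u j.
  rewrite mxE [X in X + _]mxE [X in _ + X]mxE big_ord1; congr (_ + _).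
  by apply: eq_bigr => j _; rewrite [(\col_i u i) j 0]mxE.
have y_top b : (\col_c y (mxtens_index (lshift n (0 : 'I_1), c)) 0) b 0 =
    if b == 0 then L * z 0 0 - n%:R^-1 * \sum_i u i
    else nu * z 0 0 + n%:R^-1 * \sum_i u i.
  rewrite mxE yE mxE mxtens_indexK /=.
  under eq_bigr => j _ do rewrite mxE mxtens_indexK /=.
  by rewrite -mulr_sumr; case: (b == 0); ring.
have y_shift i b : (\col_c y (mxtens_index (rshift 1 i, c)) 0) b 0 =
    if b == 0 then L * z 0 0 - u i else gam * z 0 0 + u i.
  rewrite mxE yE mxE mxtens_indexK /=.
  under eq_bigr => j _ do rewrite mxE mxtens_indexK /=.
  rewrite (bigD1 i) //= big1 ?addr0 => [|j /negPf ji]; last first.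
    have -> : ((1 + i)%N == j.+1) = (i == j) by [].
    by rewrite (eq_sym i) ji mulr0 mul0r.
  by rewrite add1n eqxx mulr1; case: (b == 0); ring.
rewrite /Mpsi -!diag_const_mx -diag_mx_row qform_diag_tens big_split_ord /= big_ord1.
rewrite row_mxEl mxE qform_swap2 !y_top /=.
under [X in _ + X = _]eq_bigr => i _ do
  rewrite (row_mxEr (const_mx l1 : 'rV[R]_1)) mxE qform_swap2 !y_shift /=.
by rewrite -!mulr_sumr /sector_term; ring.
Qed.

Lemma sum_slice_qform_Mpsi n p nxi (Ct : 'rV[R]_nxi) (L nu gam l1 l2 : R)
    (e : 'cV[R]_(nxi * p)) (dx : 'cV[R]_p) (dg : 'I_n -> 'cV[R]_p) :
  kronC Ct *m e = dx ->
  \sum_j qform (Mpsi l1 l2)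
           (Dpsi1 L nu gam *m (Ct *m slice e j) + Dpsi2 R *m \col_i dg i j 0) =
  l1 * sector_qf L nu dx (n%:R^-1 *: \sum_i dg i)
  + l2 / n%:R * \sum_i sector_qf L gam dx (dg i).
Proof.
move=> Ce; under [X in _ = _ + _ * X]eq_bigr => i _ do rewrite sector_qfE.
rewrite sector_qfE.
under [in LHS]eq_bigr => j _ do rewrite qform_Mpsi_Dpsi -kronC_mulmxE Ce.
have avgE j : (n%:R^-1 *: \sum_i dg i) j 0 = n%:R^-1 * \sum_i dg i j 0.
  by rewrite mxE summxE.
under [X in _ = _ * (2 * X) + _]eq_bigr => j _ do rewrite avgE.
under [in LHS]eq_bigr => j _ do rewrite mulrDr.
rewrite big_split /= !mulr_sumr; congr (_ + _).
  by apply: eq_bigr => j _; rewrite mulrCA.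
under eq_bigr => j _ do rewrite mulrCA mulr_sumr.
rewrite -!mulr_sumr exchange_big mulr_sumr; congr (_ * _).
by apply: eq_bigr => i _; rewrite mulr_sumr.
Qed.

End SectorConstraints.

Section LyapunovDecrease.
Variable R : realType.

Lemma LMI_qform_le n nxi (At : 'I_n -> 'M[R]_nxi) (Bt : 'I_n -> 'M[R]_(nxi, n))
    (Ct : 'rV[R]_nxi) (P : 'M[R]_nxi) (rho L nu gam l1 l2 : R) :
  nsd (LMI At Bt Ct P rho L nu gam l1 l2) -> forall e u,
  n%:R^-1 * \sum_i qform P (At i *m e + Bt i *m u) <=
  rho ^+ 2 * qform P e - qform (Mpsi l1 l2) (Dpsi1 L nu gam *m (Ct *m e) + Dpsi2 R *m u).
Proof.
move=> LMI_nsd e u; have := LMI_nsd (col_mx e u).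
rewrite qform_addmx qform_mulmx mul_row_col -mulmxA qform_block_mx !qform_bform.
rewrite bformD bformN /avg !bformZ !bform_sum.
have -> : \sum_i qform P (At i *m e + Bt i *m u) =
    \sum_i bform ((At i)^T *m P *m At i) e e + \sum_i bform ((At i)^T *m P *m Bt i) e u +
    \sum_i bform ((Bt i)^T *m P *m At i) u e + \sum_i bform ((Bt i)^T *m P *m Bt i) u u.
  by rewrite -!big_split; apply: eq_bigr => i _; rewrite !bform_mulmx qformD.
by rewrite !mulrDr; lra.
Qed.

Variables (n p nxi : nat) (At : 'I_n -> 'M[R]_nxi) (Bt : 'I_n -> 'M[R]_(nxi, n))
  (Ct : 'rV[R]_nxi) (gr : 'I_n -> 'cV[R]_p -> 'cV[R]_p).
Variables (xs : 'cV[R]_p) (xis : 'cV[R]_(nxi * p)).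
Hypothesis xis_fixed : forall i, xis = (At i *t (1%:M : 'M[R]_p)) *m xis
                                      + (Bt i *t (1%:M : 'M[R]_p)) *m stack gr xs.
Hypothesis Cxis : kronC Ct *m xis = xs.

Lemma jstep_subE xi i :
  jstep At Bt Ct gr xi i - xis = (At i *t (1%:M : 'M[R]_p)) *m (xi - xis)
    + (Bt i *t (1%:M : 'M[R]_p)) *m (stack gr (kronC Ct *m xi) - stack gr xs).
Proof. by rewrite {1}(xis_fixed i) /jstep !mulmxBr opprD addrACA. Qed.

Lemma avg_jstep_qform_le (nu gam L rho l1 l2 : R) (P : 'M[R]_nxi) :
  (forall x, 0 <= sector_qf L nu (x - xs)
                    (n%:R^-1 *: \sum_j gr j x - n%:R^-1 *: \sum_j gr j xs)) ->
  (forall x i, 0 <= sector_qf L gam (x - xs) (gr i x - gr i xs)) ->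
  0 <= l1 -> 0 <= l2 -> nsd (LMI At Bt Ct P rho L nu gam l1 l2) ->
  forall xi, n%:R^-1 * \sum_i qform (P *t (1%:M : 'M[R]_p)) (jstep At Bt Ct gr xi i - xis)
             <= rho ^+ 2 * qform (P *t (1%:M : 'M[R]_p)) (xi - xis).
Proof.
move=> sec1 sec2 l1_ge0 l2_ge0 LMI_nsd xi.
set v := kronC Ct *m xi; set e := xi - xis; set U := stack gr v - stack gr xs.
under eq_bigr => i _ do rewrite jstep_subE qform_tens1.
rewrite exchange_big mulr_sumr qform_tens1 mulr_sumr /=.
apply: (@le_trans _ _ (\sum_j (rho ^+ 2 * qform P (slice e j) - qform (Mpsi l1 l2)
    (Dpsi1 L nu gam *m (Ct *m slice e j) + Dpsi2 R *m slice U j)))).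
  apply: ler_sum => j _; under eq_bigr => i _ do rewrite sliceD !slice_tens1_mulmx.
  exact: LMI_qform_le.
rewrite sumrB lerBlDr lerDl.
have sliceU j : slice U j = \col_i (gr i v - gr i xs) j 0.
  by apply/matrixP => a b; rewrite !mxE !mxtens_indexK.
have Ce : kronC Ct *m e = v - xs by rewrite mulmxBr Cxis.
under eq_bigr => j _ do rewrite sliceU.
rewrite (sum_slice_qform_Mpsi _ _ _ _ _ _ Ce) sumrB scalerBr.
by apply: addr_ge0; apply: mulr_ge0 => //; [exact: divr_ge0 | exact: sumr_ge0].
Qed.

End LyapunovDecrease.

Section Expectation.
Variable R : realType.
Variables (n p nxi : nat) (At : 'I_n -> 'M[R]_nxi) (Bt : 'I_n -> 'M[R]_(nxi, n))
  (Ct : 'rV[R]_nxi) (gr : 'I_n -> 'cV[R]_p -> 'cV[R]_p).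
Local Notation Ex := (Exp At Bt Ct gr).
Local Notation step := (jstep At Bt Ct gr).

Lemma Exp0 xi0 h : Ex xi0 0 h = h xi0.
Proof.
rewrite /Exp expr0 invr1 mul1r (eq_bigr (fun _ => h xi0)) => [|s _]; last by rewrite tuple0.
by rewrite sumr_const card_tuple expn0.
Qed.

Lemma ExpS xi0 k h : Ex xi0 k.+1 h = n%:R^-1 * \sum_i Ex (step xi0 i) k h.
Proof.
rewrite /Exp exprS invfM -mulrA -mulr_sumr pair_big /=.
rewrite (reindex (fun q : 'I_n * k.-tuple 'I_n => [tuple of q.1 :: q.2])) /=; last first.
  exists (fun t : k.+1.-tuple 'I_n => (thead t, [tuple of behead t])).
    by move=> [i s] _ /=; congr (_, _); apply: val_inj.
  by move=> t _; apply: val_inj => /=; rewrite [in RHS](tuple_eta t).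
by [].
Qed.

Lemma ler_Exp k xi0 h1 h2 : (forall x, h1 x <= h2 x) -> Ex xi0 k h1 <= Ex xi0 k h2.
Proof.
move=> le_h; rewrite /Exp ler_wpM2l ?invr_ge0 ?exprn_ge0 ?ler0n //.
by apply: ler_sum => s _; apply: le_h.
Qed.

Lemma ExpZ k xi0 c h : Ex xi0 k (fun x => c * h x) = c * Ex xi0 k h.
Proof. by rewrite /Exp -mulr_sumr mulrCA. Qed.

Section Contraction.
Variables (c : R) (h : 'cV[R]_(nxi * p) -> R).
Hypothesis h_contract : forall x, n%:R^-1 * \sum_i h (step x i) <= c * h x.

Lemma ExpS_le k xi0 : Ex xi0 k.+1 h <= c * Ex xi0 k h.
Proof.
elim: k xi0 => [|k IHk] xi0.
  by rewrite ExpS Exp0; under eq_bigr => i _ do rewrite Exp0.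
rewrite ExpS [Ex xi0 k.+1 h]ExpS mulrCA ler_wpM2l ?invr_ge0 ?ler0n // mulr_sumr.
by apply: ler_sum => i _; exact: IHk.
Qed.

Lemma Exp_le_geometric : 0 <= c -> forall k xi0, Ex xi0 k h <= c ^+ k * h xi0.
Proof.
move=> c_ge0; elim=> [|k IHk] xi0; first by rewrite Exp0 expr0 mul1r.
rewrite exprS -mulrA; apply: le_trans (ExpS_le k xi0) _.
by rewrite ler_wpM2l // IHk.
Qed.
End Contraction.
End Expectation.

Section Spectrum.
Variable R : realType.
Local Open Scope classical_set_scope.
Local Open Scope ring_scope.

Lemma continuous_sumr (T : topologicalType) (I : finType) (F : I -> T -> R) :
  (forall i, continuous (F i)) -> continuous (fun x => \sum_i F i x).
Proof.
move=> F_cont; apply: (@continuous_big R^o I +%R 0 xpredT _ _ (index_enum I) F) => //.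
exact: add_continuous.
Qed.

Lemma continuous_qform_row m (P : 'M[R]_m) : continuous (fun r : 'rV[R]_m => qform P r^T).
Proof.
pose coord a : 'rV[R]_m -> R := fun r => r 0 a.
have coordC a : continuous (coord a) by move=> r; exact: coord_continuous.
have qformT r : qform P r^T = \sum_a \sum_b coord a r * P a b * coord b r.
  by rewrite qformE; apply: eq_bigr => a _; apply: eq_bigr => b _; rewrite !mxE.
under eq_fun do rewrite qformT.
apply: continuous_sumr => a; apply: continuous_sumr => b r.
apply: (@continuousM _ _ (fun r => coord a r * P a b) (coord b)); last exact: coordC.
by apply: (@continuousM _ _ (coord a) (fun=> P a b)); [exact: coordC | exact: cst_continuous].
Qed.

Lemma compact_unit_sphere_row m : compact [set r : 'rV[R]_m | sqnorm r^T = 1].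
Proof.
have sqnormT r : sqnorm r^T = qform 1%:M r^T by rewrite qform_scalar_mx mul1r.
apply: bounded_closed_compact.
  exists 1; split; first exact: num_real.
  move=> M M_gt1 r /= r1; apply: (le_trans _ (ltW M_gt1)).
  rewrite (_ : `|r| = mx_norm r) // mx_normrE; apply: bigmax_le => // -[i j] _ /=.
  have : r 0 j ^+ 2 <= 1.
    rewrite -r1 /sqnorm (bigD1 j) //= mxE lerDl.
    by apply: sumr_ge0 => a _; exact: sqr_ge0.
  by rewrite [i]ord1 ler_norml => ?; apply/andP; split; nra.
apply: (@preimage_closed _ _ (fun r : 'rV[R]_m => sqnorm r^T) [set 1]); last exact: closed_eq.
by move=> r _; under eq_fun do rewrite sqnormT; exact: continuous_qform_row.
Qed.

(* Compactness is available for row vectors, hence the detour through transposes. *)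
Lemma qform_unit_sphere_min m (P : 'M[R]_m) : (0 < m)%N ->
  exists2 c : 'cV[R]_m, sqnorm c = 1 &
    forall v : 'cV[R]_m, sqnorm v = 1 -> qform P c <= qform P v.
Proof.
move=> m_gt0; set S := [set r : 'rV[R]_m | sqnorm r^T = 1].
have S_neq0 : S !=set0.
  exists (delta_mx 0 (Ordinal m_gt0)); rewrite /S /= /sqnorm (bigD1 (Ordinal m_gt0)) //=.
  rewrite big1 => [|a /negPf a_neq]; last by rewrite !mxE a_neq andbF expr0n.
  by rewrite !mxE !eqxx expr1n addr0.
have [c Sc c_min] := EVT_min_rV S_neq0 (compact_unit_sphere_row (m := m))
  (continuous_subspaceT (continuous_qform_row (P := P))).
exists c^T; first by move: Sc; rewrite inE.
by move=> v v1; rewrite -[v]trmxK; apply: c_min; rewrite inE /S /= trmxK.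
Qed.

Lemma qform_ge_sqnorm m (P : 'M[R]_m) (mu : R) :
  (forall v, sqnorm v = 1 -> mu <= qform P v) -> forall v, mu * sqnorm v <= qform P v.
Proof.
move=> unit_ge v; have [->|v_neq0] := eqVneq v 0.
  by rewrite -(scale0r 0) qformZ sqnormZ expr0n /= !mul0r mulr0.
have t_gt0 : 0 < Num.sqrt (sqnorm v) by rewrite sqrtr_gt0 sqnorm_gt0.
have sq_t : Num.sqrt (sqnorm v) ^+ 2 = sqnorm v by rewrite sqr_sqrtr ?sqnorm_ge0.
have := unit_ge ((Num.sqrt (sqnorm v))^-1 *: v).
rewrite sqnormZ qformZ exprVn sq_t mulVf ?sqnorm_eq0 // => /(_ erefl).
by rewrite -ler_pdivlMr ?sqnorm_gt0 // mulrC.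
Qed.

Lemma psd_mulmx_eq0 m (Q : 'M[R]_m) x : Q^T = Q -> (forall v, 0 <= qform Q v) ->
  qform Q x = 0 -> Q *m x = 0.
Proof.
move=> Qsym Q_psd Qx0; apply/eqP; rewrite -sqnorm_eq0.
set z := Q *m x; set b := sqnorm z; set c := qform Q z.
have b_ge0 : 0 <= b by exact: sqnorm_ge0.
have c_ge0 : 0 <= c by exact: Q_psd.
have along_z t : 0 <= 2 * t * b + t ^+ 2 * c.
  have := Q_psd (x + t *: z); rewrite qformD qformZ bformZl bformZr Qx0 (bformC _ _ Qsym).
  by rewrite /bform -mulmxA -sqnormE -/b -/c; lra.
(* with t := - b / (c + 1) the right-hand side above is - b^2 (c + 2) / (c + 1)^2 *)
have := along_z (- b / (c + 1)); set t := - b / (c + 1) => ineq.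
have td : t * (c + 1) = - b by rewrite /t mulfVK // gt_eqF // ltr_pwDr.
clearbody t.
have : 0 <= - (b ^+ 2 * (c + 2)).
  have -> : - (b ^+ 2 * (c + 2)) = (2 * t * b + t ^+ 2 * c) * (c + 1) ^+ 2.
    by rewrite -(opprK b) -td; ring.
  by apply: mulr_ge0 => //; exact: sqr_ge0.
rewrite oppr_ge0 pmulr_lle0 ?ltr_wpDl // => b2_le0.
by rewrite -sqrf_eq0 eq_le b2_le0 sqr_ge0.
Qed.

Lemma sym_min_eigenvalue m (P : 'M[R]_m) : (0 < m)%N -> P^T = P ->
  exists mu, eigenvalue P mu /\ forall v, mu * sqnorm v <= qform P v.
Proof.
move=> m_gt0 Psym; have [c c1 c_min] := qform_unit_sphere_min P m_gt0.
exists (qform P c); split; last exact: qform_ge_sqnorm.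
have Qsym : (P - (qform P c)%:M)^T = P - (qform P c)%:M by rewrite linearB /= Psym tr_scalar_mx.
have Qc : (P - (qform P c)%:M) *m c = 0.
  apply: psd_mulmx_eq0 => // [v|].
    by rewrite qform_addmx qform_oppmx qform_scalar_mx subr_ge0 qform_ge_sqnorm.
  by rewrite qform_addmx qform_oppmx qform_scalar_mx c1 mulr1 subrr.
apply/eigenvalueP; exists c^T; last by rewrite trmx_eq0 -sqnorm_eq0 c1 oner_eq0.
move/eqP: Qc; rewrite mulmxBl mul_scalar_mx subr_eq0 => /eqP/(congr1 trmx).
by rewrite trmx_mul Psym linearZ.
Qed.

Lemma eigenvalue_qform m (P : 'M[R]_m) (w : 'rV[R]_m) a :
  w *m P = a *: w -> qform P w^T = a * sqnorm w^T.
Proof. by move=> wP; rewrite /qform trmxK wP -scalemxAl mxE sqnormE trmxK. Qed.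

Lemma sup_eq_max (A : set R) x : A x -> (forall a, A a -> a <= x) -> sup A = x.
Proof.
move=> Ax x_ub; apply/eqP; rewrite eq_le; apply/andP; split.
  by apply: ge_sup; [exists x | exact: x_ub].
by apply: ub_le_sup => //; exists x.
Qed.

Lemma inf_eq_min (A : set R) x : A x -> (forall a, A a -> x <= a) -> inf A = x.
Proof.
move=> Ax x_lb; apply/eqP; rewrite eq_le; apply/andP; split.
  by apply: ge_inf => //; exists x.
by apply: lb_le_inf; [exists x | exact: x_lb].
Qed.

Lemma spd_cond_bounds m (P : 'M[R]_m) : (0 < m)%N -> spd P ->
  exists mn mx, [/\ 0 < mn, cond P = mx / mn,
    forall v, mn * sqnorm v <= qform P v & forall v, qform P v <= mx * sqnorm v].
Proof.
move=> m_gt0 [Psym P_pos].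
have [mn [eig_mn mn_lb]] := sym_min_eigenvalue m_gt0 Psym.
have NPsym : (- P)^T = - P by rewrite linearN /= Psym.
have [mu [eig_mu mu_lb]] := sym_min_eigenvalue m_gt0 NPsym.
have mu_ub v : qform P v <= - mu * sqnorm v.
  by rewrite mulNr -lerN2 opprK -qform_oppmx.
have eig_range a : eigenvalue P a -> mn <= a /\ a <= - mu.
  move/eigenvalueP => [w wP w_neq0].
  have w_pos : 0 < sqnorm w^T by rewrite sqnorm_gt0 trmx_eq0.
  rewrite -(ler_pM2r w_pos) -[a <= _](ler_pM2r w_pos) -(eigenvalue_qform wP).
  by split; [exact: mn_lb | exact: mu_ub].
have eig_Nmu : eigenvalue P (- mu).
  move/eigenvalueP: eig_mu => [w wP w_neq0]; apply/eigenvalueP; exists w => //.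
  by rewrite scaleNr -wP mulmxN opprK.
have mn_gt0 : 0 < mn.
  move/eigenvalueP: (eig_mn) => [w wP w_neq0].
  have := P_pos w^T; rewrite trmx_eq0 (eigenvalue_qform wP) => /(_ w_neq0).
  by rewrite pmulr_lgt0 // sqnorm_gt0 trmx_eq0.
exists mn, (- mu); split => //; rewrite /cond.
rewrite (sup_eq_max eig_Nmu); last by move=> a /eig_range[].
by rewrite (inf_eq_min eig_mn) // => a /eig_range[].
Qed.
End Spectrum.

Theorem theorem1 (R : realType) (n p nxi : nat) (hn : (0 < n)%N) (hp : (0 < p)%N)
  (hnxi : (0 < nxi)%N)
  (f : 'I_n -> 'cV[R]_p -> R) (gr : 'I_n -> 'cV[R]_p -> 'cV[R]_p)
  (hgrad : forall i, is_gradient (f i) (gr i))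
  (hC1 : forall i, continuous (gr i))
  (xs : 'cV[R]_p)
  (hxs : forall x, n%:R^-1 *: \sum_i gr i x = 0 <-> x = xs)
  (At : 'I_n -> 'M[R]_nxi) (Bt : 'I_n -> 'M[R]_(nxi, n)) (Ct : 'rV[R]_nxi)
  (xis : 'cV[R]_(nxi * p))
  (hxis : forall i, xis = (At i *t (1%:M : 'M[R]_p)) *m xis
                          + (Bt i *t (1%:M : 'M[R]_p)) *m stack gr xs)
  (hCxis : kronC Ct *m xis = xs)
  (nu gam L : R)
  (hsec1 : forall x, 0 <= sector_qf L nu (x - xs)
             (n%:R^-1 *: \sum_j gr j x - n%:R^-1 *: \sum_j gr j xs))
  (hsec2 : forall x i, 0 <= sector_qf L gam (x - xs) (gr i x - gr i xs))
  (rho : R) (P : 'M[R]_nxi) (l1 l2 : R)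
  (hP : spd P) (hl1 : 0 <= l1) (hl2 : 0 <= l2)
  (hLMI : nsd (LMI At Bt Ct P rho L nu gam l1 l2)) :
  forall k : nat, (1 <= k)%N -> forall xi0 : 'cV[R]_(nxi * p),
    Exp At Bt Ct gr xi0 k.+1 (fun xi => qform (P *t (1%:M : 'M[R]_p)) (xi - xis))
      <= rho ^+ 2 * Exp At Bt Ct gr xi0 k (fun xi => qform (P *t (1%:M : 'M[R]_p)) (xi - xis))
    /\
    Exp At Bt Ct gr xi0 k (fun xi => sqnorm (xi - xis))
      <= rho ^+ (2 * k) * cond P * sqnorm (xi0 - xis).
Proof.
move=> k _ xi0.
set V := fun xi => qform (P *t (1%:M : 'M[R]_p)) (xi - xis).
have V_decr := avg_jstep_qform_le hxis hCxis hsec1 hsec2 hl1 hl2 hLMI.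
split; first exact: ExpS_le V_decr k xi0.
have [mn [mx [mn_gt0 -> P_ge P_le]]] := spd_cond_bounds hnxi hP.
have mnV_ge0 : 0 <= mn^-1 by rewrite invr_ge0 ltW.
apply: (@le_trans _ _ (Exp At Bt Ct gr xi0 k (fun xi => mn^-1 * V xi))).
  by apply: ler_Exp => xi; rewrite ler_pdivlMl // qform_tens1_ge.
rewrite ExpZ; apply: (@le_trans _ _ (mn^-1 * (rho ^+ (2 * k) * V xi0))).
  rewrite ler_wpM2l // exprM.
  exact: Exp_le_geometric V_decr (sqr_ge0 rho) k xi0.
rewrite (_ : _ * sqnorm _ = mn^-1 * (rho ^+ (2 * k) * (mx * sqnorm (xi0 - xis)))); last by ring.
have r_ge0 : 0 <= rho ^+ (2 * k) by rewrite exprM exprn_ge0 // sqr_ge0.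
by rewrite ler_wpM2l // ler_wpM2l // qform_tens1_le.
Qed.
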